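(* Let $A\in\mathbb{R}^{r\times(r+1)}$ have full row rank $r$. Let $T$ be an ordered subset of $r$ elements of $\{1,\dots,r+1\}$ such that $\tilde A:=A[:,T]$ is nonsingular and minimizes $\|\tilde A^{-1}\|_1$ among all nonsingular $r\times r$ submatrices of $A$. Let $H\in\mathbb{R}^{(r+1)\times r}$ be the matrix whose rows indexed by $T$ are given by $\tilde A^{-1}$ and whose remaining row is zero. Then $H$ is an ah-symmetric reflexive generalized inverse of $A$ satisfying $\|H\|_1\le\frac{2r}{r+1}\|H_{opt}\|_1$, where $H_{opt}$ is an optimal solution of $\min\{\|H\|_1 : AH=I_r\}$ (which equals $\min\{\|H\|_1: AHA=A\}$ and $\min\{\|H\|_1 : AHA=A,\ HAH=H,\ (AH)^\top=AH\}$).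
   Context: $A[:,T]$ is the submatrix of $A$ formed by the columns indexed by $T$. $\|H\|_1=\sum_{i,j}|H_{ij}|$. $H$ is a generalized inverse of $A$ if $AHA=A$, reflexive if additionally $HAH=H$, and ah-symmetric if $AH$ is symmetric. *)

From HB Require Import structures.
From mathcomp Require Import all_boot all_order all_algebra.
Set Implicit Arguments. Unset Strict Implicit. Unset Printing Implicit Defensive.
Import Order.TTheory GRing.Theory Num.Theory.
Local Open Scope ring_scope.

Definition norm1 (R : numDomainType) (m n : nat) (H : 'M[R]_(m, n)) : R :=
  \sum_(i < m) \sum_(j < n) `|H i j|.

Definition colsubmx (R : Type) (m n r : nat) (t : 'I_r -> 'I_n)
  (A : 'M[R]_(m, n)) : 'M[R]_(m, r) := colsub t A.

Definition embed_rows (R : pzRingType) (n r : nat) (t : 'I_r -> 'I_n)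
  (X : 'M[R]_(r, r)) : 'M[R]_(n, r) :=
  \matrix_(k < n, j < r)
    match [pick i : 'I_r | t i == k] with Some i => X i j | None => 0 end.

From HB Require Import structures.
From mathcomp Require Import all_boot all_order all_algebra.
From mathcomp Require Import ring lra.
Set Implicit Arguments. Unset Strict Implicit. Unset Printing Implicit Defensive.
Import Order.TTheory GRing.Theory Num.Theory.
Local Open Scope ring_scope.

(* Since A H = 1, H is a reflexive ah-symmetric generalized inverse, and
   A H' A = A already forces A H' = 1.  Let z be a nonzero vector of the kernel
   of A.  Any right inverse M of A moves along z to M - z (row k M) / z_k, a
   right inverse whose row k vanishes: it is the embedded inverse of the columns
   other than k, so by minimality its 1-norm is at least that of H.  The move
   costs at most (sum_i |z_i| - 2 |z_k|) / |z_k| times the 1-norm of row k of M,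
   and Jensen's inequality for x / (W - 2 x) provides a pivot k for which this is
   at most (r - 1) / (r + 1) times the 1-norm of M. *)

Lemma exists_notin_codom (T T' : finType) (f : T -> T') :
  (#|T| < #|T'|)%N -> exists y, y \notin codom f.
Proof.
move=> lt_TT'; case: (pickP [predC codom f]) => [y|in_codom]; first by exists y.
suff : (#|T'| <= #|T|)%N by rewrite leqNgt lt_TT'.
rewrite -(size_codom f) (leq_trans _ (card_size _)) //; apply: subset_leq_card.
by apply/subsetP => y _; have /negbFE := in_codom y.
Qed.

Section ColumnSelection.

Variables (n r : nat) (t : 'I_r -> 'I_n).
Hypothesis t_inj : injective t.

Lemma sum_codom (V : nmodType) (f : 'I_n -> V) :
  (forall l, l \notin codom t -> f l = 0) -> \sum_l f l = \sum_i f (t i).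
Proof.
move=> f_out; rewrite (bigID (mem (codom t))) /= [X in _ + X]big1 ?addr0.
  by rewrite -big_uniq ?big_image // map_inj_uniq ?enum_uniq.
by move=> l /f_out.
Qed.

Lemma mulmx_codom_supported (R : pzRingType) m p
    (A : 'M[R]_(m, n)) (M : 'M[R]_(n, p)) :
  (forall l j, l \notin codom t -> M l j = 0) ->
  A *m M = colsubmx t A *m rowsub t M.
Proof.
move=> M_out; apply/matrixP => i j; rewrite !mxE.
rewrite (@sum_codom _ (fun l => A i l * M l j)) => [|l /M_out ->]; last by rewrite mulr0.
by apply: eq_bigr => l _; rewrite !mxE.
Qed.

Lemma norm1_codom_supported (R : numDomainType) p (M : 'M[R]_(n, p)) :
  (forall l j, l \notin codom t -> M l j = 0) -> norm1 M = norm1 (rowsub t M).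
Proof.
move=> M_out; rewrite /norm1 (@sum_codom _ (fun l => \sum_j `|M l j|)).
  by apply: eq_bigr => i _; apply: eq_bigr => j _; rewrite mxE.
by move=> l l_out; rewrite big1 // => j _; rewrite M_out ?normr0.
Qed.

Lemma embed_rows_out (R : pzRingType) (X : 'M[R]_r) l j :
  l \notin codom t -> embed_rows t X l j = 0.
Proof.
rewrite mxE; case: pickP => // i /eqP <-.
by rewrite codom_f.
Qed.

Lemma rowsub_embed_rows (R : pzRingType) (X : 'M[R]_r) :
  rowsub t (embed_rows t X) = X.
Proof.
apply/matrixP => i j; rewrite !mxE.
by case: pickP => [i' /eqP/t_inj -> | /(_ i)]; rewrite ?eqxx.
Qed.

End ColumnSelection.

Definition clear_row (R : fieldType) m n (z : 'cV[R]_m) (k : 'I_m)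
    (M : 'M[R]_(m, n)) : 'M[R]_(m, n) :=
  M - z *m ((z k 0)^-1 *: row k M).

Section ClearRow.

Variables (R : numFieldType) (m n : nat) (z : 'cV[R]_m) (k : 'I_m).
Variable M : 'M[R]_(m, n).

Lemma clear_rowE i j : clear_row z k M i j = M i j - z i 0 / z k 0 * M k j.
Proof. by rewrite !mxE big_ord1 !mxE mulrA [z i 0 / _]mulrC. Qed.

Lemma clear_row_pivot j : z k 0 != 0 -> clear_row z k M k j = 0.
Proof. by move=> zk; rewrite clear_rowE divff // mul1r subrr. Qed.

Lemma mulmx_clear_row p (A : 'M[R]_(p, m)) :
  A *m z = 0 -> A *m clear_row z k M = A *m M.
Proof. by move=> Az; rewrite mulmxBr mulmxA Az mul0mx subr0. Qed.

Lemma norm1_clear_row : z k 0 != 0 ->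
  `|z k 0| * norm1 (clear_row z k M) <=
  `|z k 0| * norm1 M + (\sum_j `|M k j|) * (\sum_i `|z i 0| - 2 * `|z k 0|).
Proof.
move=> zk; set a := fun i => \sum_j `|M i j|.
have entry i j :
    `|z k 0| * `|clear_row z k M i j| <= `|z k 0| * `|M i j| + `|z i 0| * `|M k j|.
  rewrite clear_rowE -!normrM.
  have -> : z k 0 * (M i j - z i 0 / z k 0 * M k j) = z k 0 * M i j - z i 0 * M k j.
    by field.
  exact: ler_normB.
have rows i : `|z k 0| * \sum_j `|clear_row z k M i j| <= `|z k 0| * a i + `|z i 0| * a k.
  by rewrite !mulr_sumr -big_split; apply: ler_sum => j _; apply: entry.
rewrite /norm1 mulr_sumr (bigD1 k) //= big1 ?mulr0 ?add0r; last first.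
  by move=> j _; rewrite clear_row_pivot ?normr0.
apply: le_trans (ler_sum _ (fun i _ => rows i)) _.
rewrite big_split /= -mulr_sumr -mulr_suml.
rewrite [\sum_i a i](bigD1 k) //= [\sum_i `|z i 0|](bigD1 k) //= -/(a k).
by rewrite le_eqVlt; apply/orP; left; apply/eqP; ring.
Qed.

End ClearRow.

(* The tangent at x = W / N of the convex map x |-> x / (W - 2 x), cleared of
   denominators. *)
Lemma tangent_line (R : realFieldType) (N W O x : R) : 0 <= O ->
  O * (N * N * x - 2 * W) * (W - 2 * x) <= (N - 2) * W * ((N - 2) * O * x).
Proof.
move=> O_ge0; have sq_ge0 : 0 <= 2 * O * (N * x - W) ^+ 2.
  by apply: mulr_ge0; [apply: mulr_ge0 | apply: sqr_ge0].
rewrite -subr_ge0; have -> : (N - 2) * W * ((N - 2) * O * x)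
  - O * (N * N * x - 2 * W) * (W - 2 * x) = 2 * O * (N * x - W) ^+ 2 by ring.
exact: sq_ge0.
Qed.

Section CheapPivot.

Variables (R : realFieldType) (n : nat) (w a : 'I_n -> R).
Hypotheses (w_ge0 : forall k, 0 <= w k) (a_ge0 : forall k, 0 <= a k).
Hypothesis W_gt0 : 0 < \sum_k w k.

Lemma exists_cheap_pivot_balanced :
  (forall k, 0 < \sum_i w i - 2 * w k) ->
  exists2 k, 0 < w k &
    n%:R * a k * (\sum_i w i - 2 * w k) <= (n%:R - 2) * (\sum_i a i) * w k.
Proof.
move=> gap; set W := \sum_i w i in gap *.
set O := \sum_i a i; set N : R := n%:R.
have O_ge0 : 0 <= O by apply: sumr_ge0.
case: (pickP [pred k | (0 < w k) && (N * a k * (W - 2 * w k) <= (N - 2) * O * w k)]).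
  by move=> k /andP[]; exists k.
move=> expensive.
have costly k : 0 < w k -> (N - 2) * O * w k < N * a k * (W - 2 * w k).
  by move=> wk; have := expensive k; rewrite /= wk /= => /negbT; rewrite -ltNge.
have /eqP W_neq0 := lt0r_neq0 W_gt0.
have [k0 /andP[_ wk0_gt0]] := psumr_neq0P (fun k _ => w_ge0 k) W_neq0.
have nW_gt0 : 0 < (N - 2) * W.
  have -> : (N - 2) * W = \sum_k (W - 2 * w k).
    by rewrite sumrB sumr_const card_ord -mulr_sumr -/W -[W *+ n]mulr_natr; ring.
  rewrite (bigD1 k0) //=; apply: ltr_wpDr; last exact: gap.
  by apply: sumr_ge0 => k _; apply/ltW/gap.
have N_ge0 : 0 <= N by rewrite ler0n.
have cost_le k : (N - 2) * O * w k <= N * a k * (W - 2 * w k).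
  have [wk|wk_le0] := ltrP 0 (w k); first exact: ltW (costly k wk).
  have wk0 : w k = 0 by have := w_ge0 k; lra.
  rewrite {1}wk0 mulr0; apply: mulr_ge0; last exact: ltW (gap k).
  exact: mulr_ge0.
pose slack k := N * (N - 2) * W * a k - O * (N * N * w k - 2 * W).
have slack_scaled k : slack k * (W - 2 * w k)
    = (N - 2) * W * (N * a k * (W - 2 * w k))
      - O * (N * N * w k - 2 * W) * (W - 2 * w k) by rewrite /slack; ring.
have slack_ge0 k : 0 <= slack k.
  rewrite -(pmulr_lge0 _ (gap k)) slack_scaled subr_ge0.
  apply: le_trans (tangent_line N W (w k) O_ge0) _.
  by rewrite ler_pM2l //; apply: cost_le.
have slack_k0 : 0 < slack k0.
  rewrite -(pmulr_lgt0 _ (gap k0)) slack_scaled subr_gt0.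
  apply: le_lt_trans (tangent_line N W (w k0) O_ge0) _.
  by rewrite ltr_pM2l //; apply: costly.
have slack_sum : \sum_k slack k = 0.
  rewrite sumrB -!mulr_sumr sumrB -mulr_sumr sumr_const card_ord -/W -/O.
  by rewrite -[_ *+ n]mulr_natr -/N; ring.
by rewrite (psumr_eq0P (fun k _ => slack_ge0 k) slack_sum) ?ltxx in slack_k0.
Qed.

Lemma exists_cheap_pivot : (2 <= n)%N ->
  exists2 k, 0 < w k &
    n%:R * a k * (\sum_i w i - 2 * w k) <= (n%:R - 2) * (\sum_i a i) * w k.
Proof.
move=> n_ge2; set W := \sum_i w i; have W_gt0' : 0 < W := W_gt0.
case: (pickP [pred k | (0 < w k) && (W <= 2 * w k)]) => [k /andP[wk W_le]|].
  exists k => //; apply: le_trans (_ : _ <= 0) _.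
    by apply: mulr_ge0_le0; [apply: mulr_ge0 | rewrite subr_le0].
  apply: mulr_ge0 => //; apply: mulr_ge0; last exact: sumr_ge0.
  by rewrite subr_ge0 (ler_nat R 2 n).
move=> dominated; apply: exists_cheap_pivot_balanced => k; rewrite -/W subr_gt0.
have [wk|wk_le0] := ltrP 0 (w k).
  by have := dominated k; rewrite /= wk /= => /negbT; rewrite -ltNge.
by have := w_ge0 k; lra.
Qed.

End CheapPivot.

Section MinimalBasis.

Variables (R : realFieldType) (r : nat) (A : 'M[R]_(r, r.+1)).
Variable t : 'I_r -> 'I_r.+1.
Hypotheses (t_inj : injective t) (At_unit : colsubmx t A \in unitmx).
Hypothesis t_min : forall t' : 'I_r -> 'I_r.+1, injective t' ->
  colsubmx t' A \in unitmx ->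
  norm1 (invmx (colsubmx t A)) <= norm1 (invmx (colsubmx t' A)).

Let H := embed_rows t (invmx (colsubmx t A)).

Let H_out l j : l \notin codom t -> H l j = 0.
Proof. exact: embed_rows_out. Qed.

Lemma mulmx_basic_inverse : A *m H = 1%:M.
Proof.
by rewrite (mulmx_codom_supported t_inj _ H_out) rowsub_embed_rows // mulmxV.
Qed.

Lemma basic_kernel_vector :
  exists2 z : 'cV[R]_r.+1, A *m z = 0 & 0 < \sum_i `|z i 0|.
Proof.
have [k0 k0_out] : exists k0, k0 \notin codom t.
  by apply: exists_notin_codom; rewrite !card_ord.
pose z := delta_mx k0 0 - H *m col k0 A.
exists z; first by rewrite mulmxBr -colE mulmxA mulmx_basic_inverse mul1mx subrr.
have zk0 : z k0 0 = 1.
  by rewrite !mxE eqxx /= big1 ?subr0 // => j _; rewrite H_out ?mul0r.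
rewrite (bigD1 k0) //= zk0 normr1.
by apply: ltr_wpDr => //; apply: sumr_ge0.
Qed.

Lemma norm1_basic_le (k : 'I_r.+1) (M : 'M[R]_(r.+1, r)) :
  A *m M = 1%:M -> (forall j, M k j = 0) -> norm1 H <= norm1 M.
Proof.
move=> AM Mk.
have M_out l j : l \notin codom (lift k) -> M l j = 0.
  have [<-|kl] := eqVneq k l; first by rewrite Mk.
  by have [i -> _] := unlift_some kl; rewrite codom_f.
have AkM : colsubmx (lift k) A *m rowsub (lift k) M = 1%:M.
  by rewrite -(mulmx_codom_supported lift_inj _ M_out).
have [Ak_unit _] := mulmx1_unit AkM.
have invE : invmx (colsubmx (lift k) A) = rowsub (lift k) M.
  by rewrite -[invmx _]mulmx1 -AkM mulmxA mulVmx // mul1mx.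
rewrite (norm1_codom_supported t_inj H_out) rowsub_embed_rows //.
rewrite (norm1_codom_supported lift_inj M_out) -invE.
exact: t_min lift_inj Ak_unit.
Qed.

Lemma norm1_basic_bound (M : 'M[R]_(r.+1, r)) :
  A *m M = 1%:M -> norm1 H <= (2 * r)%:R / (r.+1)%:R * norm1 M.
Proof.
move=> AM; have [r0|r_gt0] := posnP r.
  have -> : norm1 H = 0.
    rewrite /norm1 big1 // => i _; rewrite big1 // => j.
    suff : (j < 0)%N by rewrite ltn0.
    by rewrite -r0.
  apply: mulr_ge0; first by apply: divr_ge0.
  by apply: sumr_ge0 => i _; apply: sumr_ge0.
have [z Az W_gt0] := basic_kernel_vector.
have [k zk_gt0 cheap] := exists_cheap_pivot (w := fun i => `|z i 0|)
  (a := fun i => \sum_j `|M i j|) (fun _ => normr_ge0 _)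
  (fun _ => sumr_ge0 _ (fun _ _ => normr_ge0 _)) W_gt0 r_gt0.
have zk : z k 0 != 0 by rewrite -normr_gt0.
have AM_cleared : A *m clear_row z k M = 1%:M by rewrite mulmx_clear_row.
have le_cleared := norm1_basic_le AM_cleared (fun j => clear_row_pivot M j zk).
have le_norm := norm1_clear_row M zk.
set N : R := (r.+1)%:R in cheap *.
have N_gt0 : 0 < N by rewrite ltr0n.
have -> : (2 * r)%:R = 2 * (N - 1) :> R by rewrite /N -natr1 natrM; ring.
rewrite mulrAC ler_pdivlMr //.
rewrite -/(norm1 M) in cheap; rewrite -(ler_pM2l N_gt0) in le_norm.
have : `|z k 0| * (N * norm1 (clear_row z k M)) <= `|z k 0| * (2 * (N - 1) * norm1 M).
  lra.
rewrite ler_pM2l // => bound_cleared.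
rewrite -(ler_pM2l N_gt0) in le_cleared; lra.
Qed.

End MinimalBasis.

Theorem theorem6p3 (R : realFieldType) (r : nat) (A : 'M[R]_(r, r.+1))
  (t : 'I_r -> 'I_(r.+1))
  (hrank : \rank A = r)
  (ht_inj : injective t)
  (hunit : colsubmx t A \in unitmx)
  (hmin : forall t' : 'I_r -> 'I_(r.+1), injective t' ->
            colsubmx t' A \in unitmx ->
            norm1 (invmx (colsubmx t A)) <= norm1 (invmx (colsubmx t' A))) :
  let H := embed_rows t (invmx (colsubmx t A)) in
  [/\ A *m H *m A = A,
      H *m A *m H = H,
      (A *m H)^T = A *m H,
      (forall H' : 'M[R]_(r.+1, r), A *m H' = 1%:M ->
         norm1 H <= (2 * r)%:R / (r.+1)%:R * norm1 H')
    & (forall H' : 'M[R]_(r.+1, r), A *m H' *m A = A ->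
         norm1 H <= (2 * r)%:R / (r.+1)%:R * norm1 H')].
Proof.
move=> H; have AH : A *m H = 1%:M := mulmx_basic_inverse ht_inj hunit.
have bound := norm1_basic_bound ht_inj hunit hmin.
split=> [||||H' AH'A].
- by rewrite AH mul1mx.
- by rewrite -mulmxA AH mulmx1.
- by rewrite AH trmx1.
- exact: bound.
- by apply: bound; rewrite -[A *m H']mulmx1 -AH mulmxA AH'A AH.
Qed.
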